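(* Let $f$ be a positive even integer and let $G(\mathcal V,\mathcal E)$ be a 2-clique network (for this $f$). Then for every partition $A,B,F$ of $\mathcal V$ with $A,B$ non-empty and $|F|\le f$, either $A \Rightarrow_{\mathcal V - F} B$ or $B \Rightarrow_{\mathcal V - F} A$.
   Context: A simple directed graph $G(\mathcal V,\mathcal E)$ with $n=6f+2$ nodes, $f$ a positive even integer, is a 2-clique network if: $\mathcal V$ is the disjoint union of $K_1=\{u_1,\dots,u_{3f+1}\}$ and $K_2=\{w_1,\dots,w_{3f+1}\}$; $(u_i,u_j)\in\mathcal E$ and $(w_i,w_j)\in\mathcal E$ for all $1\le i,j\le 3f+1$, $i\ne j$; $(u_i,w_i)\in\mathcal E$ for $1\le i\le \frac{3f}{2}$ and for $i=3f+1$; and $(w_i,u_i)\in\mathcal E$ for $\frac{3f}{2}+1\le i\le 3f$ and for $i=3f+1$. An $(X,y)$-path is a directed path from some node of $X$ to the node $y\notin X$; it excludes $F$ if it contains no node of $F$; $(X,y)$-paths are disjoint if they pairwise share only $y$. For pairwise disjoint $X,Y,F\subseteq\mathcal V$ with $|F|\le f$, $X \Rightarrow_{\mathcal V - F} Y$ means: $Y=\emptyset$, or every $y\in Y$ has at least $f+1$ pairwise disjoint $(X,y)$-paths excluding $F$. *)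

From mathcomp Require Import all_boot.
Set Implicit Arguments. Unset Strict Implicit. Unset Printing Implicit Defensive.

(* Vertex type of the 2-clique network for parameter f:
   inl i  stands for u_(i+1), inr i stands for w_(i+1), with i : 'I_(3f+1). *)
Definition tcn_vertex (f : nat) : finType :=
  ('I_(3 * f).+1 + 'I_(3 * f).+1)%type.

(* The edge relation of the 2-clique network (exactly the listed edges),
   with 0-based indices: 1-based i in [1, 3f/2] <-> 0-based i < 3f/2;
   1-based 3f+1 <-> 0-based 3f; 1-based [3f/2+1, 3f] <-> 0-based [3f/2, 3f). *)
Definition tcn_edge (f : nat) : rel (tcn_vertex f) :=
  fun a b =>
    match a, b with
    | inl i, inl j => i != j
    | inr i, inr j => i != j
    | inl i, inr j => (val i == val j) && ((val i < (3 * f)./2) || (val i == 3 * f))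
    | inr i, inl j => (val i == val j) &&
                      (((3 * f)./2 <= val i < 3 * f) || (val i == 3 * f))
    end.

Definition XyPath (V : finType) (e : rel V) (X F : {set V}) (y : V) (p : seq V) : Prop :=
  match p with
  | [::] => False
  | x :: s => [/\ x \in X, path e x s, last x s = y, uniq (x :: s)
              & all (fun v => v \notin F) (x :: s)]
  end.

Definition reaches (V : finType) (e : rel V) (f : nat) (X Y F : {set V}) : Prop :=
  Y = set0 \/
  forall y, y \in Y ->
    exists P : 'I_f.+1 -> seq V,
      (forall i, XyPath e X F y (P i)) /\
      (forall i j, i != j -> forall v, v \in P i -> v \in P j -> v = y).

From mathcomp Require Import all_boot zify.

Set Implicit Arguments. Unset Strict Implicit. Unset Printing Implicit Defensive.

(* Only two features of the 2-clique network matter: each side is a clique, and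
   every matched pair (u_i, w_i) is joined by an edge in at least one direction.
   For a target y and a source set X, the vertices of X on y's side reach y
   directly, and a vertex of X on the other side whose matching edge leads into
   y's set Y reaches y through its partner; these routes are disjoint, so it
   suffices to count such sources.  Since every matched pair meets the sources
   of A (on one side), the sources of B (on any side) or F, the counts of A's
   sources on side s and of B's sources on side t add up to at least
   (3f + 1) - f = 2f + 1; hence either A has at least f + 1 sources on both
   sides, or B has. *)

Section TwoCliques.

Variables (n f : nat) (e : rel ('I_n + 'I_n)).
Local Notation V := ('I_n + 'I_n)%type.

Definition side (v : V) : bool := if v is inl _ then true else false.
Definition partner (v : V) : V := match v with inl i => inr i | inr i => inl i end.
Definition index (v : V) : 'I_n := match v with inl i | inr i => i end.

Hypothesis clique_edge : forall v w : V, side v = side w -> v != w -> e v w.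
Hypothesis matching_edge : forall j, e (inl j) (inr j) || e (inr j) (inl j).

Lemma side_partner (v : V) : side (partner v) = ~~ side v.
Proof. by case: v. Qed.

Lemma partnerK : involutive partner.
Proof. by case. Qed.

Lemma neq_partner (v : V) : v != partner v.
Proof. by case: v. Qed.

Lemma matching_edge_partner (v : V) : e v (partner v) || e (partner v) v.
Proof. by case: v => j //=; rewrite orbC. Qed.

Definition sources (X Y : {set V}) (s : bool) : {set V} :=
  [set v in X | (side v == s) || e v (partner v) && (partner v \in Y)].

Definition route (y v : V) : seq V :=
  if (side v == side y) || (partner v == y) then [:: v; y] else [:: v; partner v; y].

Section Routes.

Variables (X Y F : {set V}).
Hypotheses (dXY : [disjoint X & Y]) (dXF : [disjoint X & F]) (dYF : [disjoint Y & F]).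

Lemma route_path (y v : V) :
  y \in Y -> v \in sources X Y (side y) -> XyPath e X F y (route y v).
Proof.
move=> yY; rewrite inE => /andP [vX vsrc].
have vy : v != y by apply: contraTneq vX => ->; rewrite (disjointFl dXY yY).
have [vF yF] := (disjointFr dXF vX, disjointFr dYF yY).
rewrite /route; case: ifP => [direct | /norP [sv pvy]].
  have evy : e v y.
    case/orP: direct => [/eqP sv | /eqP pvy]; first exact: clique_edge.
    by move: vsrc; rewrite -pvy side_partner; case: (side v) => /= /andP [].
  by rewrite /= vX evy inE vy vF yF.
have /andP [evp pY] : e v (partner v) && (partner v \in Y).
  by move: vsrc; rewrite (negbTE sv).
have epy : e (partner v) y.
  by apply: clique_edge pvy; rewrite side_partner; move: sv; case: (side v); case: (side y).
rewrite /= vX evp epy !inE negb_or neq_partner vy pvy vF yF.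
by rewrite (disjointFr dYF pY).
Qed.

Lemma mem_route (y v z : V) :
  v \in sources X Y (side y) -> z \in route y v ->
  [\/ z = y, z = v | z = partner v /\ partner v \in Y].
Proof.
rewrite inE => /andP [_ vsrc]; rewrite /route.
case: ifP => [_ | /norP [sv _]]; rewrite !inE.
  by case/orP => /eqP ->; [constructor 2 | constructor 1].
have /andP [_ pY] : e v (partner v) && (partner v \in Y) by move: vsrc; rewrite (negbTE sv).
by case/or3P => /eqP ->; [constructor 2 | constructor 3 | constructor 1].
Qed.

Lemma routes_disjoint (y v w z : V) :
  v \in sources X Y (side y) -> w \in sources X Y (side y) -> v != w ->
  z \in route y v -> z \in route y w -> z = y.
Proof.
move=> vS wS vw /(mem_route vS) zv /(mem_route wS) zw.
have notY u : u \in sources X Y (side y) -> u \notin Y.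
  by rewrite inE => /andP [uX _]; rewrite (disjointFr dXY uX).
case: zv zw => [// | -> | [-> pY]] [// | zw | [zw pY']].
- by rewrite zw eqxx in vw.
- by move: (notY v vS); rewrite zw pY'.
- by move: (notY w wS); rewrite -zw pY.
- by rewrite (can_inj partnerK zw) eqxx in vw.
Qed.

Lemma reaches_of_sources :
  (forall s, f < #|sources X Y s|) -> reaches e f X Y F.
Proof.
move=> large; right=> y yY.
pose src (i : 'I_f.+1) := enum_val (widen_ord (large (side y)) i).
exists (fun i => route y (src i)); split=> [i | i j ij z].
  exact/route_path/enum_valP.
apply: routes_disjoint; try exact: enum_valP.
by apply: contra ij => /eqP /enum_val_inj [] /val_inj ->.
Qed.

End Routes.

Lemma card_ge_of_pairs (U : {set V}) :
  (forall v, (v \in U) || (partner v \in U)) -> n <= #|U|.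
Proof.
move=> meets; apply: leq_trans (leq_imset_card index U).
rewrite -{1}(card_ord n) subset_leq_card //; apply/subsetP=> j _.
by case/orP: (meets (inl j)) => /(imset_f index).
Qed.

Section Counting.

Variables (X Y F : {set V}).
Hypothesis cover : X :|: Y :|: F = setT.

Lemma sources_meet_pair (s t : bool) (v : V) : side v = s ->
  (v \in sources X Y s :|: sources Y X t :|: F) ||
  (partner v \in sources X Y s :|: sources Y X t :|: F).
Proof.
move=> sv; have mem u : [|| u \in X, u \in Y | u \in F].
  by have := in_setT u; rewrite -cover !inE orbA.
rewrite !inE sv eqxx /= partnerK; set w := partner v.
case/or3P: (mem v) => [-> // | vY | -> ]; last by rewrite !orbT.
have [<- | st] := eqVneq s t; first by rewrite vY !orbT.
have tw : side w == t by rewrite side_partner sv; move: st; case: (s); case: (t).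
case/or3P: (mem w) => [wX | wY | ->]; last by rewrite !orbT.
  case/orP: (matching_edge_partner v) => [evw | ewv].
    by rewrite vY evw wX !orbT.
  by rewrite wX ewv vY !orbT.
by rewrite wY tw !orbT.
Qed.

Lemma card_sources_pair (s t : bool) :
  n <= #|sources X Y s| + #|sources Y X t| + #|F|.
Proof.
set U := sources X Y s :|: sources Y X t :|: F.
have cardU : #|U| <= #|sources X Y s| + #|sources Y X t| + #|F|.
  apply: leq_trans (leq_card_setU _ _) _.
  by rewrite leq_add2r leq_card_setU.
apply: leq_trans cardU; apply: card_ge_of_pairs => v.
have [sv | sv] := eqVneq (side v) s; first exact: sources_meet_pair.
rewrite orbC -{2}(partnerK v); apply: sources_meet_pair.
by rewrite side_partner; move: sv; case: (side v); case: (s).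
Qed.

End Counting.

Theorem two_cliques_reaches (A B F : {set V}) :
  3 * f < n ->
  [disjoint A & B] -> [disjoint A & F] -> [disjoint B & F] ->
  A :|: B :|: F = setT -> #|F| <= f ->
  reaches e f A B F \/ reaches e f B A F.
Proof.
move=> n_large dAB dAF dBF cover cardF.
have [/forallP largeA | /forallPn [s smallA]] := boolP [forall s, f < #|sources A B s|].
  by left; apply: reaches_of_sources.
right; apply: reaches_of_sources => [||| t] //; first by rewrite disjoint_sym.
by have := card_sources_pair cover s t; move: smallA; rewrite -leqNgt; lia.
Qed.

End TwoCliques.

Lemma tcn_clique_edge (f : nat) (v w : tcn_vertex f) :
  side v = side w -> v != w -> tcn_edge v w.
Proof. by case: v => i; case: w => j. Qed.

Lemma tcn_matching_edge (f : nat) (j : 'I_(3 * f).+1) :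
  @tcn_edge f (inl j) (inr j) || @tcn_edge f (inr j) (inl j).
Proof.
rewrite /= eqxx /=; have := ltn_ord j.
case: (ltnP j (3 * f)./2) => //= _.
case: (ltnP j (3 * f)) => [_ | j_ge j_lt]; rewrite ?orbT // orbb.
by apply/eqP; lia.
Qed.

Theorem lemma9 (f : nat) (f_pos : 0 < f) (f_even : ~~ odd f)
  (A B F : {set tcn_vertex f}) :
  [disjoint A & B] -> [disjoint A & F] -> [disjoint B & F] ->
  A :|: B :|: F = setT ->
  A != set0 -> B != set0 -> #|F| <= f ->
  reaches (@tcn_edge f) f A B F \/ reaches (@tcn_edge f) f B A F.
Proof.
move=> dAB dAF dBF cover _ _ cardF.
apply: two_cliques_reaches => //; [exact: tcn_clique_edge | exact: tcn_matching_edge].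
Qed.
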